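(* Let $\boldsymbol{X}$ be a saturated $\boldsymbol{\mathcal{L}}_\Lambda$ modal space with $\Lambda$ logically compact, let $\boldsymbol{f}$ be a clean map on $\boldsymbol{X}$ and let $d\in\mathcal{D}_{\boldsymbol{X}}$. Then for every $\boldsymbol{x}\in\boldsymbol{X}$ the limit set $\omega_{\boldsymbol{f}}(\boldsymbol{x})$ of $\boldsymbol{x}$ under $\boldsymbol{f}$ in $\boldsymbol{X}_d$ is non-empty.
   Context: Setting: countable atom set $\Phi$, finite agent set $I$, modal language $\mathcal{L}$ ($\varphi::=\top\mid p\mid\neg\varphi\mid\varphi\wedge\varphi\mid\square_i\varphi$), logic $\Lambda$ a normal modal logic extending $K$, $\boldsymbol{\mathcal{L}}_\Lambda$ the set of $\Lambda$-equivalence classes $\boldsymbol{\varphi}$ of formulas. $\Lambda$ is compact if a set of formulas is $\Lambda$-consistent iff all finite subsets are. Kripke models have countable nonempty state sets; pointed models evaluated standardly. For a set $X$ of pointed Kripke models, $\boldsymbol{X}=\{\boldsymbol{x}:x\in X\}$, $\boldsymbol{x}=\{y\in X:y,x \text{ satisfy the same formulas}\}$; $\boldsymbol{X}$ is saturated if every $\Lambda$-consistent set of formulas is satisfied by some $x\in X$. Metrics $\mathcal{D}_{\boldsymbol{X}}$: for $D\subseteq\boldsymbol{\mathcal{L}}_\Lambda$ such that for every $\boldsymbol{\psi}$ there is finite $D_\psi\subseteq D$ with any $x,y\in X$ satisfying the same elements of $D_\psi$ agreeing on $\psi$, enumerated $\boldsymbol{\varphi}_1,\boldsymbol{\varphi}_2,\ldots$,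 and $w:D\to\mathbb{R}_{>0}$ with $\sum_kw(\boldsymbol{\varphi}_k)<\infty$, $d_w(\boldsymbol{x},\boldsymbol{y})=\sum_k w(\boldsymbol{\varphi}_k)d_k(\boldsymbol{x},\boldsymbol{y})$ with $d_k=0$ if $x,y$ agree on $\varphi_k$ and $1$ otherwise. $\boldsymbol{X}_d$ is $\boldsymbol{X}$ with metric $d$. Clean map: induced via product update $x\mapsto x\otimes\Sigma\Gamma$ by a multi-pointed action model $\Sigma\Gamma=(\llbracket\Sigma\rrbracket,\mathsf{R},pre,post,\Gamma)$ (countable action set, relations $\mathsf{R}_i$, preconditions in $\mathcal{L}$, postconditions $\top$ or conjunctions of literals, designated set $\emptyset\ne\Gamma$) that is precondition finite (finitely many $\boldsymbol{pre(\sigma)}$), exhaustive (each $x\in X$ satisfies some $pre(\sigma)$, $\sigma\in\Gamma$), deterministic (no $x\in X$ satisfies two distinct designated preconditions) and closing ($x\otimes\Sigma\Gamma\in X$) over $X$; product update has states $(s,\sigma)$ with $Ms\vDash pre(\sigma)$, relations componentwise, atoms set by postconditions (true if $post(\sigma)\vDash p$, kept from $s$ unless $post(\sigma)\vDash\neg p$), and designated state $(s,\sigma)$ for the unique applicable $\sigma\in\Gamma$. $\boldsymbol{f}(\boldsymbol{x})$ is the class of $x\otimes\Sigma\Gamma$. A point $\boldsymbol{y}$ is a limit point of $\boldsymbol{x}$ under $\boldsymbol{f}$ if some subsequence $\boldsymbol{f}^{n_1}(\boldsymbol{x}),\boldsymbol{f}^{n_2}(\boldsymbol{x}),\dots$ ($n_1<n_2<\dots$)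 converges to $\boldsymbol{y}$; $\omega_{\boldsymbol{f}}(\boldsymbol{x})$ is the set of limit points. *)

From Stdlib Require Import Reals List Arith Cantor ClassicalEpsilon.
From Coquelicot Require Import Coquelicot.
Set Implicit Arguments.
Open Scope R_scope.

Definition countable (T : Type) : Prop :=
  exists g : T -> nat, forall a b, g a = g b -> a = b.
Definition finite_type (T : Type) : Prop :=
  exists l : list T, forall i, In i l.

Inductive form (A I : Type) : Type :=
| Top : form A I
| Var : A -> form A I
| Neg : form A I -> form A I
| And : form A I -> form A I -> form A I
| Box : I -> form A I -> form A I.
Arguments Top {A I}.
Arguments Var {A I} _.
Arguments Neg {A I} _.
Arguments And {A I} _ _.
Arguments Box {A I} _ _.

Definition Imp {A I} (f g : form A I) : form A I := Neg (And f (Neg g)).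
Definition Iff {A I} (f g : form A I) : form A I := And (Imp f g) (Imp g f).
Definition conj_list {A I} (l : list (form A I)) : form A I := fold_right (@And A I) Top l.

Record kmodel (A I : Type) := {
  st : Type;
  st_count : countable st;
  rel : I -> st -> st -> Prop;
  val : A -> st -> Prop }.

Record pmodel (A I : Type) := { pm : kmodel A I; pt : st pm }.

Fixpoint sat {A I} (M : kmodel A I) (s : st M) (f : form A I) : Prop :=
  match f with
  | Top => True
  | Var p => val M p s
  | Neg g => ~ sat M s g
  | And g h => sat M s g /\ sat M s h
  | Box i g => forall t, rel M i s t -> sat M t g
  end.

Definition psat {A I} (x : pmodel A I) (f : form A I) : Prop := sat (pm x) (pt x) f.

Definition bool_hom {A I} (v : form A I -> bool) : Prop :=
  v Top = true /\ (forall f, v (Neg f) = negb (v f)) /\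
  (forall f g, v (And f g) = andb (v f) (v g)).

(** propositional tautology (instances): true under every Boolean valuation
    treating atoms and boxed formulas as propositional variables *)
Definition taut {A I} (f : form A I) : Prop := forall v, bool_hom v -> v f = true.

Fixpoint subst {A I} (s : A -> form A I) (f : form A I) : form A I :=
  match f with
  | Top => Top
  | Var p => s p
  | Neg g => Neg (subst s g)
  | And g h => And (subst s g) (subst s h)
  | Box i g => Box i (subst s g)
  end.

Definition normal_logic {A I} (L : form A I -> Prop) : Prop :=
  (forall f, taut f -> L f) /\
  (forall i f g, L (Imp (Box i (Imp f g)) (Imp (Box i f) (Box i g)))) /\
  (forall f g, L (Imp f g) -> L f -> L g) /\
  (forall i f, L f -> L (Box i f)) /\
  (forall s f, L f -> L (subst s f)).

Definition Lequiv {A I} (L : form A I -> Prop) (f g : form A I) : Prop := L (Iff f g).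

Definition consistent {A I} (L : form A I -> Prop) (G : form A I -> Prop) : Prop :=
  ~ exists l : list (form A I), (forall f, In f l -> G f) /\ L (Neg (conj_list l)).

Definition logically_compact {A I} (L : form A I -> Prop) : Prop :=
  forall G : form A I -> Prop,
    consistent L G <->
    (forall l : list (form A I), (forall f, In f l -> G f) ->
       consistent L (fun f => In f l)).

Definition modal_space {A I} (L : form A I -> Prop) (X : pmodel A I -> Prop) : Prop :=
  forall x, X x -> forall f, L f -> psat x f.

Definition saturated {A I} (L : form A I -> Prop) (X : pmodel A I -> Prop) : Prop :=
  forall G, consistent L G -> exists x, X x /\ forall f, G f -> psat x f.

(** * The metrics d_w in D_X.
    D is given by an enumeration e : nat -> option form (None = no element,
    allowing finite D), injective on Lambda-classes. *)
Definition disagree {A I} (x y : pmodel A I) (f : form A I) : R :=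
  if excluded_middle_informative (psat x f <-> psat y f) then 0 else 1.

Definition in_D {A I} (L : form A I -> Prop) (X : pmodel A I -> Prop)
    (e : nat -> option (form A I)) (w : nat -> R) : Prop :=
  (forall k l f g, e k = Some f -> e l = Some g -> Lequiv L f g -> k = l) /\
  (forall psi, exists K : list nat,
      (forall k, In k K -> e k <> None) /\
      forall x y, X x -> X y ->
        (forall k f, In k K -> e k = Some f -> (psat x f <-> psat y f)) ->
        (psat x psi <-> psat y psi)) /\
  (forall k, e k <> None -> 0 < w k) /\
  ex_series (fun k => match e k with Some _ => w k | None => 0 end).

Definition dist {A I} (e : nat -> option (form A I)) (w : nat -> R)
    (x y : pmodel A I) : R :=
  Series (fun k => match e k with Some f => w k * disagree x y f | None => 0 end).

Inductive lit_conj {A I} : form A I -> Prop :=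
| lc_pos : forall p, lit_conj (Var p)
| lc_neg : forall p, lit_conj (Neg (Var p))
| lc_and : forall f g, lit_conj f -> lit_conj g -> lit_conj (And f g).

Definition is_post {A I} (f : form A I) : Prop := f = Top \/ lit_conj f.

Record amodel (A I : Type) := {
  act : Type;
  act_count : countable act;
  arel : I -> act -> act -> Prop;
  pre : act -> form A I;
  post : act -> form A I;
  desig : act -> Prop }.

Definition entails {A I} (f g : form A I) : Prop :=
  forall y : pmodel A I, psat y f -> psat y g.

Definition pstate {A I} (E : amodel A I) (M : kmodel A I) : Type :=
  { p : st M * act E | sat M (fst p) (pre E (snd p)) }.

Lemma pstate_count {A I} (E : amodel A I) (M : kmodel A I) : countable (pstate E M).
Proof.
  destruct (st_count M) as [g1 H1]. destruct (act_count E) as [g2 H2].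
  exists (fun q => Cantor.to_nat (g1 (fst (proj1_sig q)), g2 (snd (proj1_sig q)))).
  intros q1 q2 Heq.
  apply (f_equal Cantor.of_nat) in Heq. rewrite !Cantor.cancel_of_to in Heq.
  injection Heq as E1 E2. apply H1 in E1. apply H2 in E2.
  destruct q1 as [[s a] Ha], q2 as [[t b] Hb]; simpl in *. subst.
  f_equal. apply proof_irrelevance.
Qed.

Definition prod_model {A I} (E : amodel A I) (M : kmodel A I) : kmodel A I := {|
  st := pstate E M;
  st_count := pstate_count E M;
  rel := fun i a b => rel M i (fst (proj1_sig a)) (fst (proj1_sig b)) /\
                      arel E i (snd (proj1_sig a)) (snd (proj1_sig b));
  val := fun p a => entails (post E (snd (proj1_sig a))) (Var p) \/
                    (val M p (fst (proj1_sig a)) /\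
                     ~ entails (post E (snd (proj1_sig a))) (Neg (Var p))) |}.

(** x (x) Sigma Gamma; designated state (s, sigma) for the (unique, under
    determinism) applicable designated sigma; x itself if none applies
    (never happens for x in X when the action model is exhaustive). *)
Definition upd {A I} (E : amodel A I) (x : pmodel A I) : pmodel A I :=
  match excluded_middle_informative
          (exists a, desig E a /\ sat (pm x) (pt x) (pre E a)) with
  | left H =>
      let (a, Ha) := constructive_indefinite_description _ H in
      {| pm := prod_model E (pm x);
         pt := exist (fun p : st (pm x) * act E => sat (pm x) (fst p) (pre E (snd p)))
                     (pt x, a) (proj2 Ha) |}
  | right _ => x
  end.

Definition clean {A I} (L : form A I -> Prop) (X : pmodel A I -> Prop) (E : amodel A I) : Prop :=
  (forall a, is_post (post E a)) /\
  (exists a, desig E a) /\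
  (exists l : list (form A I), forall a, exists f, In f l /\ Lequiv L (pre E a) f) /\
  (forall x, X x -> exists a, desig E a /\ psat x (pre E a)) /\
  (forall x, X x -> forall a b, desig E a -> desig E b ->
       psat x (pre E a) -> psat x (pre E b) -> a = b) /\
  (forall x, X x -> X (upd E x)).

Definition limit_point {A I} (e : nat -> option (form A I)) (w : nat -> R)
    (E : amodel A I) (x y : pmodel A I) : Prop :=
  exists n : nat -> nat, (forall k, (n k < n (S k))%nat) /\
    is_lim_seq (fun k => dist e w (Nat.iter (n k) (upd E) x) y) 0.

From Pilot Require Import Defs.
From Stdlib Require Import Reals.
From Coquelicot Require Import Coquelicot.
From Stdlib Require Import List Lia Lra ClassicalEpsilon Classical.

(* The space X_d is sequentially compact.  Along a subsequence of any sequence in X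
   (Cantor diagonal extraction) the truth value of every enumerated formula e k
   stabilises.  The limiting set of literals is finitely satisfiable in X, hence
   consistent, so saturation realises it by some y in X.  The m-th term of the
   subsequence agrees with y on e 0, ..., e m, so its distance to y is at most the
   m-th tail of the weight series.  Applied to the orbit of x, which stays in X
   since the action model is closing, this gives a limit point. *)

Definition infinitely_often (P : nat -> Prop) : Prop :=
  forall N, exists j, (N <= j)%nat /\ P j.

Lemma infinitely_often_split (P Q : nat -> Prop) :
  infinitely_often P ->
  infinitely_often (fun j => P j /\ Q j) \/ infinitely_often (fun j => P j /\ ~ Q j).
Proof.
  intros HP.
  destruct (classic (infinitely_often (fun j => P j /\ Q j))) as [HQ | HnQ];
    [now left | right].
  apply not_all_ex_not in HnQ as [N0 HN0].
  intros N. destruct (HP (max N N0)) as [j [Hj Pj]].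
  exists j. split; [lia |]. split; [exact Pj |].
  intros Qj. apply HN0. exists j. split; [lia | auto].
Qed.

Section CantorSubsequence.

Variable a : nat -> nat -> bool.

Definition agree_below (c : nat -> bool) (k j : nat) : Prop :=
  forall i, (i < k)%nat -> a j i = c i.

Definition next_bit (c : nat -> bool) (k : nat) : bool :=
  if excluded_middle_informative
       (infinitely_often (fun j => agree_below c k j /\ a j k = true))
  then true else false.

(* Only the first k values of limit_prefix k are meaningful. *)
Fixpoint limit_prefix (k : nat) : nat -> bool :=
  match k with
  | 0 => fun _ => false
  | S k' => fun i => if Nat.eq_dec i k' then next_bit (limit_prefix k') k'
                     else limit_prefix k' i
  end.

Definition limit_bits (i : nat) : bool := limit_prefix (S i) i.

Lemma limit_prefix_stable k i : (i < k)%nat -> limit_prefix k i = limit_bits i.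
Proof.
  induction k as [| k IH]; intros Hik; [lia |]. simpl.
  destruct (Nat.eq_dec i k) as [-> | Hne].
  - unfold limit_bits. simpl. now destruct (Nat.eq_dec k k).
  - apply IH. lia.
Qed.

Lemma limit_bits_next k : limit_bits k = next_bit (limit_prefix k) k.
Proof. unfold limit_bits. simpl. now destruct (Nat.eq_dec k k). Qed.

Lemma infinitely_often_agree_limit k : infinitely_often (agree_below limit_bits k).
Proof.
  induction k as [| k IH].
  - intros N. exists N. split; [lia |]. intros i Hi. lia.
  - assert (Hprefix : forall j, agree_below (limit_prefix k) k j <-> agree_below limit_bits k j).
    { intros j. split; intros Hj i Hi; rewrite (Hj i Hi), limit_prefix_stable; auto. }
    assert (Hextend : forall b j, agree_below limit_bits k j -> a j k = b ->
              limit_bits k = b -> agree_below limit_bits (S k) j).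
    { intros b j Hj Hjk Hb i Hi.
      destruct (Nat.eq_dec i k) as [-> | Hne]; [congruence | apply Hj; lia]. }
    pose proof (limit_bits_next k) as Hbit. unfold next_bit in Hbit.
    destruct (excluded_middle_informative _) as [Htrue | Hfalse].
    + intros N. destruct (Htrue N) as [j [HNj [Hj Hjk]]].
      exists j. split; [exact HNj |]. apply (Hextend true); auto. now apply Hprefix.
    + destruct (infinitely_often_split _ (fun j => a j k = true) IH) as [Hinf | Hinf].
      * exfalso. apply Hfalse. intros N. destruct (Hinf N) as [j [HNj [Hj Hjk]]].
        exists j. split; [exact HNj |]. split; [now apply Hprefix | exact Hjk].
      * intros N. destruct (Hinf N) as [j [HNj [Hj Hjk]]].
        exists j. split; [exact HNj |]. apply (Hextend false); auto.
        now apply Bool.not_true_is_false.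
Qed.

Definition next_agreeing_row (k N : nat) : nat :=
  proj1_sig (constructive_indefinite_description _ (infinitely_often_agree_limit k N)).

Lemma next_agreeing_row_spec k N :
  (N <= next_agreeing_row k N)%nat /\ agree_below limit_bits k (next_agreeing_row k N).
Proof.
  unfold next_agreeing_row. now destruct (constructive_indefinite_description _ _).
Qed.

Fixpoint diagonal_index (m : nat) : nat :=
  match m with
  | 0 => next_agreeing_row 1 0
  | S m' => next_agreeing_row (S (S m')) (S (diagonal_index m'))
  end.

Lemma diagonal_index_agree m : agree_below limit_bits (S m) (diagonal_index m).
Proof. destruct m; apply next_agreeing_row_spec. Qed.

Lemma bool_seq_convergent_subseq :
  exists (n : nat -> nat) (c : nat -> bool),
    (forall m, (n m < n (S m))%nat) /\
    forall m k, (k <= m)%nat -> a (n m) k = c k.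
Proof.
  exists diagonal_index, limit_bits. split.
  - intros m. simpl.
    destruct (next_agreeing_row_spec (S (S m)) (S (diagonal_index m))). lia.
  - intros m k Hkm. apply diagonal_index_agree. lia.
Qed.

End CantorSubsequence.

Lemma list_bounded_witness {T : Type} (P : nat -> T -> Prop) (l : list T) :
  (forall f, In f l -> exists k, P k f) ->
  exists M, forall f, In f l -> exists k, (k <= M)%nat /\ P k f.
Proof.
  induction l as [| g l IH]; intros Hl.
  - exists 0%nat. intros f [].
  - destruct IH as [M HM]; [intros f Hf; apply Hl; now right |].
    destruct (Hl g (or_introl eq_refl)) as [k Hk].
    exists (max M k). intros f [<- | Hf].
    + exists k. split; [lia | exact Hk].
    + destruct (HM f Hf) as [k' [Hk' HPk']]. exists k'. split; [lia | exact HPk'].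
Qed.

Lemma Series_zero : Series (fun _ : nat => 0) = 0.
Proof.
  rewrite (Series_ext _ (fun _ => 0 * 1)) by (intros; ring).
  rewrite Series_scal_l. ring.
Qed.

Section Metric.

Context {A I : Type} (e : nat -> option (form A I)) (w : nat -> R).

Definition weight (k : nat) : R := match e k with Some _ => w k | None => 0 end.

Hypothesis weight_pos : forall k, e k <> None -> 0 < w k.
Hypothesis weight_summable : ex_series weight.

Definition agree_upto (m : nat) (x y : pmodel A I) : Prop :=
  forall k f, (k <= m)%nat -> e k = Some f -> (psat x f <-> psat y f).

Definition dist_term (x y : pmodel A I) (k : nat) : R :=
  match e k with Some f => w k * disagree x y f | None => 0 end.

Lemma dist_term_bounds (x y : pmodel A I) k : 0 <= dist_term x y k <= weight k.
Proof.
  unfold dist_term, weight. destruct (e k) eqn:Hek; [| lra].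
  assert (0 < w k) by (apply weight_pos; congruence).
  unfold disagree. destruct (excluded_middle_informative _); nra.
Qed.

Lemma dist_nonneg (x y : pmodel A I) : 0 <= Defs.dist e w x y.
Proof.
  change (0 <= Series (dist_term x y)).
  rewrite <- Series_zero. apply Series_le.
  - intros k. pose proof (dist_term_bounds x y k). lra.
  - apply (@ex_series_le R_AbsRing R_CompleteNormedModule _ weight); [| exact weight_summable].
    intros k. pose proof (dist_term_bounds x y k).
    change (Rabs (dist_term x y k) <= weight k). rewrite Rabs_pos_eq; lra.
Qed.

Lemma dist_le_tail m (x y : pmodel A I) :
  agree_upto m x y -> Defs.dist e w x y <= Series (fun k => weight (S m + k)).
Proof.
  intros Hagree. change (Series (dist_term x y) <= Series (fun k => weight (S m + k))).
  rewrite (Series_incr_n_aux _ (S m)).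
  - apply Series_le; [intros k; apply dist_term_bounds |].
    now apply (ex_series_incr_n weight (S m)).
  - intros k Hk. unfold dist_term. destruct (e k) eqn:Hek; [| reflexivity].
    unfold disagree. destruct (excluded_middle_informative _) as [_ | Hne]; [ring |].
    exfalso. apply Hne, (Hagree k); [lia | exact Hek].
Qed.

Lemma weight_tail_lim : is_lim_seq (fun m => Series (fun k => weight (S m + k))) 0.
Proof.
  apply is_lim_seq_ext with (u := fun m => Series weight - sum_n weight m).
  { intros m. rewrite (Series_incr_n weight (S m)), sum_n_Reals by (lia || auto).
    simpl. ring. }
  replace (Finite 0) with (Finite (Series weight - Series weight)) by (f_equal; ring).
  apply is_lim_seq_minus'; [apply is_lim_seq_const |].
  exact (Series_correct _ weight_summable).
Qed.

Lemma dist_lim_of_agree (xs : nat -> pmodel A I) (y : pmodel A I) :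
  (forall m, agree_upto m (xs m) y) -> is_lim_seq (fun m => Defs.dist e w (xs m) y) 0.
Proof.
  intros Hagree.
  apply is_lim_seq_le_le with (u := fun _ => 0)
    (w := fun m => Series (fun k => weight (S m + k))).
  - intros m. split; [apply dist_nonneg | apply dist_le_tail, Hagree].
  - apply is_lim_seq_const.
  - exact weight_tail_lim.
Qed.

End Metric.

Lemma psat_conj_list {A I} (x : pmodel A I) (l : list (form A I)) :
  (forall f, In f l -> psat x f) -> psat x (conj_list l).
Proof.
  induction l as [| g l IH]; intros Hl; unfold psat in *; simpl; [exact Logic.I |].
  split; [apply Hl; now left |]. apply IH. intros f Hf. apply Hl. now right.
Qed.

Lemma finitely_satisfiable_consistent {A I} (L : form A I -> Prop)
    (X : pmodel A I -> Prop) (G : form A I -> Prop) :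
  modal_space L X ->
  (forall l, (forall f, In f l -> G f) -> exists x, X x /\ forall f, In f l -> psat x f) ->
  consistent L G.
Proof.
  intros HX Hfin [l [HlG HLl]].
  destruct (Hfin l HlG) as [x [Hx Hsat]].
  exact (HX x Hx _ HLl (psat_conj_list x l Hsat)).
Qed.

Section SequentialCompactness.

Context {A I : Type} (L : form A I -> Prop) (X : pmodel A I -> Prop).
Hypothesis HX : modal_space L X.
Hypothesis Hsat : saturated L X.
Variable e : nat -> option (form A I).

Definition literal (b : bool) (f : form A I) : form A I := if b then f else Neg f.

Lemma saturated_realizes_limit_profile (xs : nat -> pmodel A I) (c : nat -> bool) :
  (forall m, X (xs m)) ->
  (forall m k f, (k <= m)%nat -> e k = Some f -> (psat (xs m) f <-> c k = true)) ->
  exists y, X y /\ forall k f, e k = Some f -> (psat y f <-> c k = true).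
Proof.
  intros Hxs Hprofile.
  set (G := fun g => exists k f, e k = Some f /\ g = literal (c k) f).
  assert (Hlit : forall m k f, (k <= m)%nat -> e k = Some f -> psat (xs m) (literal (c k) f)).
  { intros m k f Hkm Hek. specialize (Hprofile m k f Hkm Hek).
    unfold literal, psat in *. destruct (c k); simpl; intuition congruence. }
  assert (HG : consistent L G).
  { apply (finitely_satisfiable_consistent L X G HX). intros l HlG.
    destruct (list_bounded_witness
                (fun k g => exists f, e k = Some f /\ g = literal (c k) f) l HlG)
      as [M HM].
    exists (xs M). split; [apply Hxs |]. intros g Hg.
    destruct (HM g Hg) as [k [HkM [f [Hek ->]]]]. now apply (Hlit M). }
  destruct (Hsat G HG) as [y [Hy HyG]].
  exists y. split; [exact Hy |]. intros k f Hek.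
  specialize (HyG (literal (c k) f) (ex_intro _ k (ex_intro _ f (conj Hek eq_refl)))).
  unfold literal, psat in *. destruct (c k); simpl in *; intuition congruence.
Qed.

Definition truth (x : pmodel A I) (f : form A I) : bool :=
  if excluded_middle_informative (psat x f) then true else false.

Lemma truth_spec x f : truth x f = true <-> psat x f.
Proof. unfold truth. destruct (excluded_middle_informative _); intuition congruence. Qed.

Lemma saturated_seq_compact (w : nat -> R) (Hd : in_D L X e w) (xs : nat -> pmodel A I) :
  (forall j, X (xs j)) ->
  exists y, X y /\ exists n : nat -> nat, (forall k, (n k < n (S k))%nat) /\
    is_lim_seq (fun k => Defs.dist e w (xs (n k)) y) 0.
Proof.
  intros Hxs. destruct Hd as (_ & _ & Hw & HW).
  set (profile := fun j k => match e k with Some f => truth (xs j) f | None => false end).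
  destruct (bool_seq_convergent_subseq profile) as (n & c & Hn & Hconv).
  assert (Hsub : forall m k f, (k <= m)%nat -> e k = Some f ->
                   (psat (xs (n m)) f <-> c k = true)).
  { intros m k f Hkm Hek. rewrite <- (Hconv m k Hkm), <- truth_spec.
    unfold profile. now rewrite Hek. }
  destruct (saturated_realizes_limit_profile (fun m => xs (n m)) c (fun m => Hxs (n m)) Hsub)
    as [y [Hy Hyc]].
  exists y. split; [exact Hy |]. exists n. split; [exact Hn |].
  apply (dist_lim_of_agree e w Hw HW).
  intros m k f Hkm Hek. rewrite (Hsub m k f Hkm Hek). symmetry. exact (Hyc k f Hek).
Qed.

End SequentialCompactness.

Theorem proposition8 (A I : Type) (HA : countable A) (HI : finite_type I)
  (L : form A I -> Prop) (HL : normal_logic L) (Hcomp : logically_compact L)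
  (X : pmodel A I -> Prop) (HX : modal_space L X) (Hsat : saturated L X)
  (E : amodel A I) (HE : clean L X E)
  (e : nat -> option (form A I)) (w : nat -> R) (Hd : in_D L X e w)
  (x : pmodel A I) (Hx : X x) :
  exists y, X y /\ limit_point e w E x y.
Proof.
  destruct HE as (_ & _ & _ & _ & _ & Hclosing).
  assert (Horbit : forall j, X (Nat.iter j (upd E) x)).
  { induction j as [| j IH]; [exact Hx | exact (Hclosing _ IH)]. }
  exact (saturated_seq_compact L X HX Hsat e w Hd _ Horbit).
Qed.
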